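(* Let $S$ be a finite-dimensional operator system with $S^{sa}=S^+-S^+$. Then $S$ contains a matrix order unit: there is $e\in S^+$ such that for every $n\ge1$ and every $X\in M_n(S)^{sa}$ there is $\lambda>0$ with $\lambda(1_n\otimes e)\pm X\ge0$ in $M_n(S)$.
   Context: An operator system here is a (possibly nonunital) norm-closed selfadjoint subspace $S\subseteq B(H)$ for a Hilbert space $H$, with $M_n(S)^+=M_n(S)\cap B(H^n)^+$; $1_n\otimes e$ is the diagonal matrix with $e$ in each diagonal entry. *)

From HB Require Import structures.
From mathcomp Require Import all_boot all_order all_algebra.
From mathcomp Require Import reals complex.
Set Implicit Arguments. Unset Strict Implicit. Unset Printing Implicit Defensive.
Import Order.TTheory GRing.Theory Num.Theory.
Local Open Scope ring_scope.

Section OpSys.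
Variables (R : realType) (H : lmodType R[i]) (ip : H -> H -> R[i]).

Definition nrm2 (x : H) : R[i] := ip x x.

Definition is_hilbert : Prop :=
  [/\ (forall (a : R[i]) (x y z : H), ip (a *: x + y) z = a * ip x z + ip y z),
      (forall x y : H, ip y x = (ip x y)^*),
      (forall x : H, 0 <= ip x x),
      (forall x : H, ip x x = 0 -> x = 0) &
      (forall u : nat -> H,
         (forall eps : R[i], 0 < eps -> exists N : nat, forall m n : nat,
              (N <= m)%N -> (N <= n)%N -> nrm2 (u m - u n) < eps) ->
         exists x : H, forall eps : R[i], 0 < eps -> exists N : nat,
              forall n : nat, (N <= n)%N -> nrm2 (u n - x) < eps)].

Definition bounded_op (T : H -> H) : Prop :=
  (forall (a : R[i]) (x y : H), T (a *: x + y) = a *: T x + T y) /\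
  exists M : R[i], forall x : H, nrm2 (T x) <= M * nrm2 x.

Definition op_subspace (S : (H -> H) -> Prop) : Prop :=
  [/\ (forall T, S T -> bounded_op T),
      S (fun _ => 0) &
      (forall (a : R[i]) T U, S T -> S U -> S (fun x => a *: T x + U x))].

Definition selfadjoint_set (S : (H -> H) -> Prop) : Prop :=
  forall T, S T -> exists U, S U /\ forall x y : H, ip (T x) y = ip x (U y).

Definition norm_closed (S : (H -> H) -> Prop) : Prop :=
  forall (u : nat -> (H -> H)) (T : H -> H), (forall k, S (u k)) -> bounded_op T ->
    (forall eps : R[i], 0 < eps -> exists N : nat, forall k : nat, (N <= k)%N ->
        forall x : H, nrm2 (u k x - T x) <= eps * nrm2 x) ->
    S T.

Definition finite_dim (S : (H -> H) -> Prop) : Prop :=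
  exists (d : nat) (b : 'I_d -> (H -> H)), (forall i, S (b i)) /\
    forall T, S T -> exists c : 'I_d -> R[i], T = fun x => \sum_(i < d) c i *: b i x.

Definition operator_system (S : (H -> H) -> Prop) : Prop :=
  [/\ op_subspace S, selfadjoint_set S & norm_closed S].

(* n x n matrices over S, viewed as operators on H^n := 'I_n -> H;
   (X v)_i = \sum_j X i j (v j). *)
Definition mat_in (S : (H -> H) -> Prop) n (X : 'I_n -> 'I_n -> (H -> H)) : Prop :=
  forall i j, S (X i j).

Definition mat_pos n (X : 'I_n -> 'I_n -> (H -> H)) : Prop :=
  forall v : 'I_n -> H, 0 <= \sum_(i < n) \sum_(j < n) ip (X i j (v j)) (v i).

Definition mat_sa n (X : 'I_n -> 'I_n -> (H -> H)) : Prop :=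
  forall v w : 'I_n -> H,
    \sum_(i < n) \sum_(j < n) ip (X i j (w j)) (v i) =
    \sum_(j < n) \sum_(i < n) ip (w j) (X j i (v i)).

Definition diag_op n (e : H -> H) : 'I_n -> 'I_n -> (H -> H) :=
  fun i j => if i == j then e else (fun _ => 0).

Definition op_pos (T : H -> H) : Prop := forall x : H, 0 <= ip (T x) x.
Definition op_sa (T : H -> H) : Prop := forall x y : H, ip (T x) y = ip x (T y).

End OpSys.

From mathcomp Require Import all_boot all_order all_algebra.
From mathcomp Require Import reals complex ring.
From Stdlib Require Import FunctionalExtensionality.
Set Implicit Arguments. Unset Strict Implicit. Unset Printing Implicit Defensive.
Import Order.TTheory GRing.Theory Num.Theory.
Local Open Scope ring_scope.

(* Writing an element of S as A/2 - iB/2 with A, B selfadjoint and then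
   A, B as differences of positives, S is spanned by finitely many positive
   elements P_k; take e = sum_k P_k.  For a positive P the quadratic form of P
   gives |2 Re <P x, y>| <= <P x, x> + <P y, y>, so for X with entries
   sum_k c_ijk P_k the real number <X v, v> is bounded in absolute value by a
   multiple of <(1_n (x) e) v, v>, the multiple depending only on the c_ijk. *)

Lemma ler_sum_term (R : numDomainType) (I : finType) (F : I -> R) (k : I) :
  (forall k, 0 <= F k) -> F k <= \sum_k F k.
Proof. by move=> F_ge0; rewrite (bigD1 k) //= lerDl sumr_ge0. Qed.

Lemma ge0_add_half (F : numFieldType) (m q z : F) :
  0 <= m -> 0 <= q -> 0 <= m * q + (z + z) -> 0 <= (m + 1) * q + z.
Proof.
move=> m_ge0 q_ge0 h; rewrite -(pmulr_rge0 _ (ltr0n _ 2)).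
have -> : 2%:R * ((m + 1) * q + z) = m * q + (z + z) + (m + 2%:R) * q by ring.
by rewrite addr_ge0 // mulr_ge0 // addr_ge0.
Qed.

Section OperatorSystem.
Variables (R : realType) (H : lmodType R[i]) (ip : H -> H -> R[i]).

Definition in_span (I : finType) (F : I -> H -> H) (T : H -> H) : Prop :=
  exists c : I -> R[i], T = fun x => \sum_k c k *: F k x.

Lemma in_span_flatten (I J : finType) (b : I -> H -> H) (F : I -> J -> H -> H)
    (T : H -> H) :
  in_span b T -> (forall i, in_span (F i) (b i)) ->
  in_span (fun p : I * J => F p.1 p.2) T.
Proof.
move=> [c ->] /fin_all_exists [g bE].
exists (fun p => c p.1 * g p.1 p.2); apply: functional_extensionality => x.
rewrite -(pair_bigA _ (fun i l => (c i * g i l) *: F i l x)) /=.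
apply: eq_bigr => i _; rewrite bE scaler_sumr.
by apply: eq_bigr => l _; rewrite scalerA.
Qed.

Definition mat_form n (X : 'I_n -> 'I_n -> H -> H) (v : 'I_n -> H) : R[i] :=
  \sum_(i < n) \sum_(j < n) ip (X i j (v j)) (v i).

Definition coef_weight (I : finType) n (c : 'I_n -> 'I_n -> I -> R[i]) : R[i] :=
  \sum_(i < n) \sum_(j < n) \sum_k (c i j k * (c i j k)^* + 1).

Lemma coef_weight_ge0 (I : finType) n (c : 'I_n -> 'I_n -> I -> R[i]) :
  0 <= coef_weight c.
Proof. by do 3!(apply: sumr_ge0 => ? _); rewrite addr_ge0 ?mul_conjC_ge0. Qed.

Lemma coef_weightN (I : finType) n (c : 'I_n -> 'I_n -> I -> R[i]) :
  coef_weight (fun i j k => - c i j k) = coef_weight c.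
Proof. by do 3!(apply: eq_bigr => ? _); rewrite rmorphN mulrNN. Qed.

Section Subspace.
Variable S : (H -> H) -> Prop.
Hypothesis S_sub : op_subspace ip S.

Lemma op_subspace_add T U : S T -> S U -> S (fun x => T x + U x).
Proof.
case: S_sub => _ _ S_comb T_S U_S.
have -> : (fun x => T x + U x) = (fun x => 1 *: T x + U x).
  by apply: functional_extensionality => x; rewrite scale1r.
exact: S_comb.
Qed.

Lemma op_subspace_scale a T : S T -> S (fun x => a *: T x).
Proof.
case: S_sub => _ S0 S_comb T_S.
have -> : (fun x => a *: T x) = (fun x => a *: T x + (fun=> 0) x).
  by apply: functional_extensionality => x; rewrite addr0.
exact: S_comb.
Qed.

Lemma op_subspace_sum (I : Type) (r : seq I) (F : I -> H -> H) :
  (forall k, S (F k)) -> S (fun x => \sum_(k <- r) F k x).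
Proof.
move=> F_S; elim: r => [|k r IHr].
  have -> : (fun x => \sum_(k <- [::]) F k x) = (fun=> 0).
    by apply: functional_extensionality => x; rewrite big_nil.
  by case: S_sub.
have -> : (fun x => \sum_(j <- k :: r) F j x) =
          (fun x => F k x + \sum_(j <- r) F j x).
  by apply: functional_extensionality => x; rewrite big_cons.
exact: op_subspace_add.
Qed.

End Subspace.

Section InnerProduct.
Hypothesis hH : is_hilbert ip.

Lemma ip_scalarl z : scalar (ip ^~ z).
Proof. by case: hH => L *; move=> a x y; apply: L. Qed.

Lemma ipDl x y z : ip (x + y) z = ip x z + ip y z.
Proof. exact: (GRing.semilinear_linear (ip_scalarl z)).2. Qed.

Lemma ipZl a x z : ip (a *: x) z = a * ip x z.
Proof. exact: (GRing.semilinear_linear (ip_scalarl z)).1. Qed.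

Lemma ipNl x z : ip (- x) z = - ip x z.
Proof. by rewrite -scaleN1r ipZl mulN1r. Qed.

Lemma ip0l z : ip 0 z = 0.
Proof. by rewrite -(scale0r 0) ipZl mul0r. Qed.

Lemma ip_suml (I : Type) (r : seq I) (F : I -> H) z :
  ip (\sum_(k <- r) F k) z = \sum_(k <- r) ip (F k) z.
Proof. exact: (big_morph (ip ^~ z) (fun x y => ipDl x y z) (ip0l z)). Qed.

Lemma ip_conj x y : ip x y = (ip y x)^*.
Proof. by case: hH => _ C *; apply: C. Qed.

Lemma ipDr x y z : ip z (x + y) = ip z x + ip z y.
Proof. by rewrite ip_conj ipDl rmorphD /= -!ip_conj. Qed.

Lemma ipZr a x z : ip z (a *: x) = a^* * ip z x.
Proof. by rewrite ip_conj ipZl rmorphM /= -ip_conj. Qed.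

Section PositiveOperator.
Variable P : H -> H.
Hypotheses (P_lin : linear P) (P_pos : op_pos ip P).

Lemma op_pos_expand c x y :
  ip (P (c *: x + y)) (c *: x + y) =
  c * c^* * ip (P x) x + ip (P y) y + (c * ip (P x) y + c^* * ip (P y) x).
Proof. by rewrite P_lin ipDl ipZl !ipDr !ipZr; ring. Qed.

Lemma op_pos_sa : op_sa ip P.
Proof.
move=> x y; rewrite [ip x _]ip_conj.
set a := ip (P x) y; set b := ip (P y) x.
have cross_real c : (c * a + c^* * b)^* = c * a + c^* * b.
  have diag_ge0 : 0 <= c * c^* * ip (P x) x + ip (P y) y.
    by rewrite addr_ge0 // mulr_ge0 // mul_conjC_ge0.
  have := geC0_conj (P_pos (c *: x + y)).
  by rewrite op_pos_expand rmorphD /= (geC0_conj diag_ge0) => /addrI.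
(* polarization: realness of the cross term for c = 1 and c = 'i *)
have := cross_real 1; have := cross_real 'i.
rewrite !rmorphD !rmorphM /= conjCi conjCK rmorph1 rmorphN /= conjCi opprK.
rewrite !mul1r => h_i h_1.
have /eqP : 2%:R * (a - b^*) = 0.
  have -> : 2%:R * (a - b^*) = (a + b - (a^* + b^*))
      + 'i * ((- 'i * a^* + 'i * b^*) - ('i * a + - 'i * b))
      + ('i * 'i + 1) * (a^* - b^* + a - b) by ring.
  by rewrite h_1 h_i mulCii !subrr addNr mulr0 mul0r !addr0.
by rewrite mulf_eq0 pnatr_eq0 subr_eq0 => /eqP.
Qed.

Lemma op_pos_cross c x y q : ip (P x) x <= q -> ip (P y) y <= q ->
  0 <= (c * c^* + 1) * q + (c * ip (P x) y + (c * ip (P x) y)^*).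
Proof.
move=> le_xq le_yq; have := P_pos (c *: x + y).
rewrite op_pos_expand [ip (P y) x]op_pos_sa [ip y _]ip_conj => quad_ge0.
have -> : (c * c^* + 1) * q + (c * ip (P x) y + (c * ip (P x) y)^*) =
    c * c^* * ip (P x) x + ip (P y) y + (c * ip (P x) y + c^* * (ip (P x) y)^*)
    + (c * c^* * (q - ip (P x) x) + (q - ip (P y) y)).
  by rewrite rmorphM /=; ring.
apply: addr_ge0 => //.
by rewrite addr_ge0 ?subr_ge0 // mulr_ge0 ?subr_ge0 // mul_conjC_ge0.
Qed.

End PositiveOperator.

Lemma op_cartesian_decomp b U : (forall x y, ip (b x) y = ip x (U y)) ->
  [/\ op_sa ip (fun x => b x + U x),
      op_sa ip (fun x => 'i *: b x + (- 'i) *: U x) &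
      b = fun x => 2^-1 *: ((b x + U x) - 'i *: ('i *: b x + (- 'i) *: U x))].
Proof.
move=> adj; have adj' x y : ip (U x) y = ip x (b y) by rewrite ip_conj -adj -ip_conj.
split.
- by move=> x y; rewrite ipDl ipDr adj adj' addrC.
- move=> x y; rewrite ipDl !ipZl ipDr !ipZr adj adj' rmorphN /= conjCi opprK.
  by rewrite addrC.
apply: functional_extensionality => x.
have -> : (b x + U x) - 'i *: ('i *: b x + (- 'i) *: U x) = 2%:R *: b x.
  rewrite scalerDr !scalerA mulrN mulCii opprK scaleN1r scale1r opprD opprK.
  by rewrite addrACA subrr addr0 scaler_nat.
by rewrite scalerA mulVf ?pnatr_eq0 // scale1r.
Qed.

Lemma in_span_pos4 (S : (H -> H) -> Prop) :
  op_subspace ip S -> selfadjoint_set ip S ->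
  (forall T, S T -> op_sa ip T -> exists P Q : H -> H,
     [/\ S P, op_pos ip P, S Q, op_pos ip Q & T = fun x => P x - Q x]) ->
  forall b, S b -> exists F : 'I_4 -> H -> H,
    (forall l, S (F l) /\ op_pos ip (F l)) /\ in_span F b.
Proof.
move=> S_sub S_adj S_sa b b_S; have [U [U_S adj]] := S_adj b b_S.
have [A_sa B_sa bE] := op_cartesian_decomp adj.
have [P1 [Q1 [P1_S P1_pos Q1_S Q1_pos /(congr1 (@^~ _)) /= AE]]] :=
  S_sa _ (op_subspace_add S_sub b_S U_S) A_sa.
have [P2 [Q2 [P2_S P2_pos Q2_S Q2_pos /(congr1 (@^~ _)) /= BE]]] := S_sa _
  (op_subspace_add S_sub (op_subspace_scale S_sub 'i b_S)
                         (op_subspace_scale S_sub (- 'i) U_S)) B_sa.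
exists (fun l => nth P1 [:: P1; Q1; P2; Q2] l).
split; first by case=> [[|[|[|[|]]]]].
exists (fun l : 'I_4 => [:: 2^-1; - 2^-1; - (2^-1 * 'i); 2^-1 * 'i]`_l).
apply: functional_extensionality => x.
rewrite {1}bE /= AE BE !big_ord_recl big_ord0 /= addr0 !scaleNr.
by rewrite !scalerBr !scalerA opprB !addrA [LHS]addrAC.
Qed.

Lemma op_system_pos_span (S : (H -> H) -> Prop) :
  operator_system ip S -> finite_dim S ->
  (forall T, S T -> op_sa ip T -> exists P Q : H -> H,
     [/\ S P, op_pos ip P, S Q, op_pos ip Q & T = fun x => P x - Q x]) ->
  exists (I : finType) (P : I -> H -> H),
    (forall k, S (P k) /\ op_pos ip (P k)) /\ forall T, S T -> in_span P T.
Proof.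
case=> S_sub S_adj _ [d [b [b_S b_span]]] S_sa.
have /fin_all_exists [F F_spec] := fun i => in_span_pos4 S_sub S_adj S_sa (b_S i).
exists ('I_d * 'I_4)%type, (fun p => F p.1 p.2); split.
  by case=> i l; apply: (F_spec i).1.
by move=> T /b_span T_span; apply: in_span_flatten T_span (fun i => (F_spec i).2).
Qed.

Lemma mat_form_conj n (X : 'I_n -> 'I_n -> H -> H) v :
  mat_sa ip X -> (mat_form X v)^* = mat_form X v.
Proof.
move=> X_sa; rewrite {2}/mat_form X_sa rmorph_sum; apply: eq_bigr => i _.
by rewrite rmorph_sum; apply: eq_bigr => j _; rewrite [RHS]ip_conj.
Qed.

Lemma diag_op_form n e (v : 'I_n -> H) i :
  \sum_(j < n) ip (diag_op e i j (v j)) (v i) = ip (e (v i)) (v i).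
Proof.
rewrite (bigD1 i) //= /diag_op eqxx big1 ?addr0 // => j /negbTE ji.
by rewrite eq_sym ji ip0l.
Qed.

Lemma mat_form_diag_add n e a (X : 'I_n -> 'I_n -> H -> H) v :
  mat_form (fun i j x => a *: diag_op e i j x + X i j x) v =
  a * \sum_(i < n) ip (e (v i)) (v i) + mat_form X v.
Proof.
rewrite /mat_form mulr_sumr -big_split; apply: eq_bigr => i _ /=.
rewrite -diag_op_form mulr_sumr -big_split; apply: eq_bigr => j _ /=.
by rewrite ipDl ipZl.
Qed.

Lemma mat_form_opp n (X : 'I_n -> 'I_n -> H -> H) v :
  mat_form (fun i j x => - X i j x) v = - mat_form X v.
Proof.
rewrite /mat_form -sumrN; apply: eq_bigr => i _.
by rewrite -sumrN; apply: eq_bigr => j _; rewrite ipNl.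
Qed.

Section PositiveFamily.
Variables (I : finType) (P : I -> H -> H).
Hypotheses (P_lin : forall k, linear (P k)) (P_pos : forall k, op_pos ip (P k)).

Lemma mat_form_coef n (X : 'I_n -> 'I_n -> H -> H) c v :
  (forall i j x, X i j x = \sum_k c i j k *: P k x) ->
  mat_form X v = \sum_(i < n) \sum_(j < n) \sum_k c i j k * ip (P k (v j)) (v i).
Proof.
move=> XE; apply: eq_bigr => i _; apply: eq_bigr => j _.
by rewrite XE ip_suml; apply: eq_bigr => k _; rewrite ipZl.
Qed.

Lemma coef_form_bound n (X : 'I_n -> 'I_n -> H -> H) c v :
  (forall i j x, X i j x = \sum_k c i j k *: P k x) ->
  0 <= coef_weight c * \sum_(i < n) ip (\sum_k P k (v i)) (v i) +
       (mat_form X v + (mat_form X v)^*).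
Proof.
move=> XE; rewrite (mat_form_coef _ XE); set Q := \sum_(i < n) ip _ _.
have P_le_Q j k : ip (P k (v j)) (v j) <= Q.
  have e_ge0 i : 0 <= ip (\sum_k P k (v i)) (v i).
    by rewrite ip_suml sumr_ge0 // => k' _; apply: P_pos.
  apply: le_trans (ler_sum_term j e_ge0).
  by rewrite ip_suml; apply: ler_sum_term => k'; apply: P_pos.
set Z := \sum_(i < n) _.
have -> : coef_weight c * Q + (Z + Z^*) = \sum_(i < n) \sum_(j < n) \sum_k
    ((c i j k * (c i j k)^* + 1) * Q +
     (c i j k * ip (P k (v j)) (v i) + (c i j k * ip (P k (v j)) (v i))^*)).
  by do 3!(rewrite rmorph_sum mulr_suml -!big_split; apply: eq_bigr => ? _).
by do 3!(apply: sumr_ge0 => ? _); apply: op_pos_cross.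
Qed.

Lemma coef_mat_bound n (X : 'I_n -> 'I_n -> H -> H) c v :
  (forall i j x, X i j x = \sum_k c i j k *: P k x) ->
  (mat_form X v)^* = mat_form X v ->
  0 <= mat_form (fun i j x =>
         (coef_weight c + 1) *: diag_op (fun x => \sum_k P k x) i j x + X i j x) v.
Proof.
move=> XE X_real; rewrite mat_form_diag_add.
apply: ge0_add_half; first exact: coef_weight_ge0.
  by rewrite sumr_ge0 // => i _; rewrite ip_suml sumr_ge0 // => k _; apply: P_pos.
by rewrite -{2}X_real; apply: coef_form_bound.
Qed.

Lemma span_mat_order_unit n (X : 'I_n -> 'I_n -> H -> H) :
  mat_sa ip X -> (forall i j, in_span P (X i j)) ->
  exists lambda : R[i], [/\ 0 < lambda,
    mat_pos ip (fun i j x =>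
      lambda *: diag_op (fun x => \sum_k P k x) i j x + X i j x) &
    mat_pos ip (fun i j x =>
      lambda *: diag_op (fun x => \sum_k P k x) i j x - X i j x)].
Proof.
move=> X_sa X_span.
have [c XE] : exists c, forall i j x, X i j x = \sum_k c i j k *: P k x.
  have [c cE] := fin_all_exists (fun i => fin_all_exists (X_span i)).
  by exists c => i j x; rewrite cE.
have NXE i j x : - X i j x = \sum_k (- c i j k) *: P k x.
  by rewrite XE -sumrN; apply: eq_bigr => k _; rewrite scaleNr.
exists (coef_weight c + 1); split.
- by rewrite ltr_wpDl ?coef_weight_ge0.
- by move=> v; apply: coef_mat_bound XE (mat_form_conj v X_sa).
- move=> v; rewrite -(coef_weightN c); apply: coef_mat_bound NXE _.
  by rewrite mat_form_opp rmorphN /= mat_form_conj.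
Qed.

End PositiveFamily.
End InnerProduct.
End OperatorSystem.

Theorem lemma8p5 (R : realType) (H : lmodType R[i]) (ip : H -> H -> R[i])
  (S : (H -> H) -> Prop) :
  is_hilbert ip ->
  operator_system ip S ->
  finite_dim S ->
  (* S^sa = S^+ - S^+ *)
  (forall T : H -> H, (S T /\ op_sa ip T) <->
     exists P Q : H -> H, [/\ S P, op_pos ip P, S Q, op_pos ip Q &
                           T = (fun x => P x - Q x)]) ->
  exists e : H -> H, [/\ S e, op_pos ip e &
    forall (n : nat) (X : 'I_n -> 'I_n -> (H -> H)),
      (1 <= n)%N -> mat_in S X -> mat_sa ip X ->
      exists lambda : R[i], [/\ 0 < lambda,
        mat_pos ip (fun i j x => lambda *: diag_op e i j x + X i j x) &
        mat_pos ip (fun i j x => lambda *: diag_op e i j x - X i j x)]].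
Proof.
move=> hH S_os S_fin S_sa; have [S_sub _ _] := S_os.
have [I [P [P_S P_span]]] := op_system_pos_span hH S_os S_fin
  (fun T T_S T_sa => (S_sa T).1 (conj T_S T_sa)).
have P_lin k : linear (P k) by case: S_sub => /(_ _ (P_S k).1) [].
exists (fun x => \sum_k P k x); split.
- exact: (op_subspace_sum S_sub _ (fun k => (P_S k).1)).
- by move=> x; rewrite ip_suml // sumr_ge0 // => k _; apply: (P_S k).2.
move=> n X _ X_S X_sa.
exact (span_mat_order_unit hH P_lin (fun k => (P_S k).2) X_sa
  (fun i j => P_span _ (X_S i j))).
Qed.
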